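(* Let $X$ be a set with $|X|=n\ge2$ and let $g\in\Gamma_i(X)$ for some $i\ge1$. Then $|\Gamma(g)|=\frac{2^{2i-1}(3n-5)+4}{3}$ and $|\Gamma_{i+1}(X)|=\frac{4^{i-1}(3n-5)+2}{3}\,|\Gamma_i(X)|$.
   Context: Let $1$ be a symbol not in $X$. Elements of height $\ge 2$ are triples $g=(g^l,g^c,g^r)$; $\Gamma_0(X)=\{1\}$, $\Gamma_1(X)=X$, each $x\in X$ identified with the triple $(1,x,1)$ (so $x^l=x^r=1$); for $i\ge 2$, $\Gamma_i(X)$ is the set of triples $g\in\Gamma_{i-1}(X)\times\Gamma_{i-2}(X)\times\Gamma_{i-1}(X)$ with $g^l\neq g^r$ and $g^c\in\{(g^l)^l,(g^l)^r\}\cap\{(g^r)^l,(g^r)^r\}$; $\Gamma(X)=\bigcup_{i\ge0}\Gamma_i(X)$. For $g\in\Gamma(X)$, $\Gamma(g)=\{g_1\in\Gamma(X): g_1^l=g\text{ or }g_1^r=g\}$. *)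

From mathcomp Require Import all_boot.
From Stdlib Require Import List.

Set Implicit Arguments.
Unset Strict Implicit.
Unset Printing Implicit Defensive.

(* Elements of Gamma(X): the symbol 1 (One), elements x of X (Leaf x,
   identified with the triple (1,x,1)), and triples (Node l c r). *)
Inductive gam (X : Type) : Type :=
| One : gam X
| Leaf : X -> gam X
| Node : gam X -> gam X -> gam X -> gam X.
Arguments One {X}.

Definition gl {X : Type} (g : gam X) : gam X :=
  match g with Node a _ _ => a | _ => One end.
Definition gr {X : Type} (g : gam X) : gam X :=
  match g with Node _ _ c => c | _ => One end.
Definition gc {X : Type} (g : gam X) : gam X :=
  match g with Node _ b _ => b | Leaf x => Leaf x | One => One end.

Fixpoint Gam {X : Type} (i : nat) (g : gam X) {struct i} : Prop :=
  match i with
  | 0 => g = One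
  | 1 => exists x, g = Leaf x
  | S ((S k) as j) =>
      Gam j (gl g) /\ Gam k (gc g) /\ Gam j (gr g) /\
      (exists a b c, g = Node a b c) /\
      gl g <> gr g /\
      (gc g = gl (gl g) \/ gc g = gr (gl g)) /\
      (gc g = gl (gr g) \/ gc g = gr (gr g))
  end.

Definition GamAll {X : Type} (g : gam X) : Prop := exists i, Gam i g.

Definition GamOf {X : Type} (g : gam X) (g1 : gam X) : Prop :=
  GamAll g1 /\ (gl g1 = g \/ gr g1 = g).

Definition has_card {T : Type} (P : T -> Prop) (n : nat) : Prop :=
  exists s : list T, NoDup s /\ (forall x, In x s <-> P x) /\ length s = n.

(* For g ∈ Γ_i(X) let Γ_L(g) be the elements of Γ(X) with left component g.
   Swapping the outer components maps Γ_L(g) onto the elements with right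
   component g, and none has both since g1^l ≠ g1^r, so |Γ(g)| = 2|Γ_L(g)|.
   An element of Γ_L(g) is (g, c, r) with c a component of g and
   r ∈ Γ(c) \ {g}.  For a letter g there are n - 1 of them (c = 1, r another
   letter); for g of height ≥ 2 the two choices c = g^l ≠ g^r each contribute
   |Γ(c)| - 1.  Hence p_i := |Γ_L(g)| depends only on i, with p_1 = n - 1 and
   p_(i+1) = 2(2 p_i - 1), so 3 p_i = 4^(i-1) (3n - 5) + 2.  Finally
   Γ_(i+1)(X) is the disjoint union of the Γ_L(l), l ∈ Γ_i(X). *)

From mathcomp Require Import all_boot zify.
From Stdlib Require Import List.
Set Implicit Arguments.
Unset Strict Implicit.

Lemma In_mem (T : eqType) (x : T) (s : list T) : In x s <-> x \in s.
Proof.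
elim: s => [|a s IH] //=; rewrite seq.in_cons; split.
- by case=> [->|/IH ->]; rewrite ?eqxx ?orbT.
- by case/orP=> [/eqP ->|/IH]; [left | right].
Qed.

Lemma uniq_NoDup (T : eqType) (s : list T) : uniq s -> NoDup s.
Proof.
elim: s => [|a s IH] /=; first by constructor.
by case/andP=> /negP a_notin_s /IH; constructor=> // /In_mem.
Qed.

Lemma length_size (T : Type) (s : list T) : length s = size s.
Proof. by elim: s => //= a s ->. Qed.

Section HasCard.
Variables T U : Type.
Implicit Types P Q : T -> Prop.

Lemma has_card_ext P Q m :
  (forall x, P x <-> Q x) -> has_card P m -> has_card Q m.
Proof.
move=> PQ [s [s_uniq [s_P <-]]]; exists s; split=> //; split=> // x.
by split=> [/s_P/PQ | /PQ/s_P].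
Qed.

Lemma has_card_finType (A : finType) : has_card (fun _ : A => True) #|A|.
Proof.
exists (enum A); split; first exact/uniq_NoDup/enum_uniq.
split; last by rewrite length_size cardE.
by move=> x; rewrite In_mem mem_enum.
Qed.

Lemma has_card_pair (a b : T) :
  a <> b -> has_card (fun x => x = a \/ x = b) 2.
Proof.
move=> a_neq_b; exists [:: a; b]; split; last by split=> // x /=; intuition.
apply: NoDup_cons; first by case=> // /esym.
by apply: NoDup_cons => //; apply: NoDup_nil.
Qed.

Lemma has_card_union P Q a b :
  (forall x, P x -> Q x -> False) ->
  has_card P a -> has_card Q b -> has_card (fun x => P x \/ Q x) (a + b).
Proof.
move=> PQ0 [s [s_uniq [s_P <-]]] [t [t_uniq [t_Q <-]]].
exists (s ++ t); split; last split.
- by apply: NoDup_app => // x /s_P Px /t_Q; apply: PQ0.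
- by move=> x; rewrite in_app_iff s_P t_Q.
- by rewrite length_app.
Qed.

Lemma has_card_image P (f : T -> U) m : injective f ->
  has_card P m -> has_card (fun y => exists x, P x /\ y = f x) m.
Proof.
move=> f_inj [s [s_uniq [s_P <-]]]; exists (map f s); split; last split.
- by apply: NoDup_map_NoDup_ForallPairs => // x y _ _ /f_inj.
- move=> y; rewrite in_map_iff; split.
  + by move=> [x [<- /s_P Px]]; exists x.
  + by move=> [x [/s_P sx ->]]; exists x.
- by rewrite length_map.
Qed.

Lemma has_card_remove P m a :
  has_card P m -> P a -> has_card (fun x => P x /\ x <> a) m.-1.
Proof.
move=> [s [s_uniq [s_P <-]]] /s_P s_a.
have [s1 [s2 def_s]] := in_split _ _ s_a; subst s.
exists (s1 ++ s2); split; last split.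
- exact: NoDup_remove_1 s_uniq.
- move=> x; rewrite -s_P; split.
  + move=> s12x; split; last by move=> x_a; subst x; apply: NoDup_remove_2 s_uniq s12x.
    by move: s12x; rewrite !in_app_iff /=; tauto.
  + by rewrite !in_app_iff /= => -[[|[<-|]] ne]; [left | case: ne | right].
- by rewrite !length_app /=; lia.
Qed.

Lemma has_card_sigma (I : U -> Prop) (F : U -> T -> Prop) m k :
  (forall l l' x, F l x -> F l' x -> l = l') ->
  has_card I m -> (forall l, I l -> has_card (F l) k) ->
  has_card (fun x => exists l, I l /\ F l x) (k * m).
Proof.
move=> F_disj [s [s_uniq [s_I <-]]] F_card.
suff: has_card (fun x => exists l, In l s /\ F l x) (k * length s).
  by apply: has_card_ext => x; split=> -[l [Il Flx]]; exists l; split=> //; apply/s_I.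
have {}F_card l : In l s -> has_card (F l) k by move/s_I; apply: F_card.
clear s_I; elim: s s_uniq F_card => [|a s IH] s_uniq F_card /=.
  exists nil; split; first exact: NoDup_nil.
  by rewrite muln0; split=> // x; split=> // -[l [[]]].
rewrite mulnS; inversion s_uniq; subst.
suff: has_card (fun x => F a x \/ exists l, In l s /\ F l x) (k + k * length s).
  apply: has_card_ext => x; split.
  - by case=> [Fax | [l [sl Flx]]]; [exists a; split; [left|] | exists l; split; [right|]].
  - by case=> l [[<-|sl] Flx]; [left | right; exists l].
apply: has_card_union; first by move=> x Fax [l [sl /(F_disj _ _ _ Fax) a_l]]; subst l.
- by apply: F_card; left.
- by apply: IH => // l sl; apply: F_card; right.
Qed.

End HasCard.

(* [GamOfL_count n i] is p_(i+1) for |X| = n. *)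
Fixpoint GamOfL_count (n i : nat) : nat :=
  if i is j.+1 then (2 * GamOfL_count n j).-1 * 2 else n.-1.

Lemma GamOfL_count_closed n i : 2 <= n -> 3 * GamOfL_count n i = 4 ^ i * (3 * n - 5) + 2.
Proof.
move=> n_ge2; elim: i => [|i IH] /=; first lia.
by rewrite expnS -mulnA; move: (4 ^ i * _) IH => u; lia.
Qed.

Lemma GamOfL_countE n i : 2 <= n -> GamOfL_count n i = (4 ^ i * (3 * n - 5) + 2) %/ 3.
Proof. by move=> /GamOfL_count_closed <-; rewrite mulKn. Qed.

Lemma double_GamOfL_countE n i : 2 <= n ->
  2 * GamOfL_count n i = (2 ^ (2 * i.+1 - 1) * (3 * n - 5) + 4) %/ 3.
Proof.
move=> /(GamOfL_count_closed i) closed.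
have -> : 2 ^ (2 * i.+1 - 1) = 2 * 4 ^ i by rewrite mulnS subSS subn0 expnS expnM.
by rewrite -mulnA (_ : _ + 4 = 3 * (2 * GamOfL_count n i)) ?mulKn //; lia.
Qed.

Section Gamma.
Variable X : finType.
Implicit Types g l c r : gam X.

Fixpoint height g : nat :=
  if g is Node l _ _ then (height l).+1 else if g is Leaf _ then 1 else 0.

Definition GamOfL g g1 := GamAll g1 /\ gl g1 = g.
Definition GamOfR g g1 := GamAll g1 /\ gr g1 = g.

Definition swap g := if g is Node l c r then Node r c l else g.

Lemma swapK : involutive swap. Proof. by case. Qed.
Lemma gl_swap g : gl (swap g) = gr g. Proof. by case: g. Qed.
Lemma gr_swap g : gr (swap g) = gl g. Proof. by case: g. Qed.

Lemma Gam_height i g : Gam i g -> height g = i.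
Proof.
elim: g i => [|x|l IHl c _ r _] [|[|k]] //; try by case.
- by case=> _ [_ [_ [_ [/(_ erefl)]]]].
- by case=> _ [_ [_ [_ [/(_ erefl)]]]].
- by case=> Gl _; rewrite /= (IHl k.+1 Gl).
Qed.

Lemma Gam_children i g : Gam i.+1 g -> Gam i (gl g) /\ Gam i (gr g).
Proof. by case: i => [[x ->] | i [? [_ [?]]]]. Qed.

Lemma Gam_SS_Node i g : Gam i.+2 g -> exists l c r, g = Node l c r.
Proof. by case=> _ [_ [_ []]]. Qed.

Lemma Gam_SS_gl_neq_gr i g : Gam i.+2 g -> gl g <> gr g.
Proof. by case=> _ [_ [_ [_ []]]]. Qed.

Lemma Gam_Node i l c r :
  Gam i.+2 (Node l c r) <-> Gam i.+1 l /\ Gam i.+1 r /\ l <> r /\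
    (c = gl l \/ c = gr l) /\ (c = gl r \/ c = gr r).
Proof.
split=> [[Gl [_ [Gr [_ rest]]]] | [Gl [Gr [l_r [cl cr]]]]].
  exact: conj Gl (conj Gr rest).
have Gc : Gam i c by case: cl => ->; have [] := Gam_children Gl.
by split=> //; split=> //; split=> //; split=> //; exists l, c, r.
Qed.

Lemma Gam_swap i g : Gam i g -> Gam i (swap g).
Proof.
case: i => [|[|i]]; [by move=> -> | by move=> [x ->]; exists x |].
move=> /[dup] /Gam_SS_Node [l [c [r ->]]] /Gam_Node Gg.
by apply/Gam_Node; intuition.
Qed.

Lemma GamAll_parent i g g1 :
  Gam i.+1 g -> GamAll g1 -> gl g1 = g \/ gr g1 = g -> Gam i.+2 g1.
Proof.
move=> Gg [j Gg1] g1g.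
have g_One : g <> One by move=> g_One; move: (Gam_height Gg); rewrite g_One.
case: j Gg1 => [|[|j]] Gg1.
- by move: g1g; rewrite Gg1 => -[] /esym.
- by case: Gg1 g1g => x -> [] /esym.
- suff ji : j = i by rewrite -ji.
  have [Gl Gr] := Gam_children Gg1.
  by apply/succn_inj; rewrite -(Gam_height Gg); case: g1g => <-; apply/esym/Gam_height.
Qed.

Lemma GamOfL_height i g g1 : Gam i.+1 g -> GamOfL g g1 -> Gam i.+2 g1.
Proof. by move=> Gg [Gg1 g1g]; apply: GamAll_parent Gg Gg1 (or_introl g1g). Qed.

Lemma GamOf_child i g c : Gam i.+2 g -> c = gl g \/ c = gr g -> GamOf c g.
Proof. by move=> Gg cg; split; [exists i.+2 | case: cg => ->; tauto]. Qed.

Lemma GamOfR_swap g g1 : GamOfR g g1 <-> exists g2, GamOfL g g2 /\ g1 = swap g2.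
Proof.
split=> [[[i Gg1] g1g] | [g2 [[[i Gg2] g2g] ->]]].
- exists (swap g1); rewrite swapK; split=> //.
  by split; [exists i; apply: Gam_swap | rewrite gl_swap].
- by split; [exists i; apply: Gam_swap | rewrite gr_swap].
Qed.

Lemma GamOfL_GamOfR_disjoint i g g1 :
  Gam i.+1 g -> GamOfL g g1 -> GamOfR g g1 -> False.
Proof.
move=> Gg Lg1 [_ g1g]; apply: Gam_SS_gl_neq_gr (GamOfL_height Gg Lg1) _.
by rewrite (proj2 Lg1).
Qed.

Lemma card_GamOf i g p : Gam i.+1 g -> has_card (GamOfL g) p -> has_card (GamOf g) (2 * p).
Proof.
move=> Gg L_card; rewrite mul2n -addnn.
suff: has_card (fun g1 => GamOfL g g1 \/ GamOfR g g1) (p + p).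
  by apply: has_card_ext => g1; rewrite /GamOf /GamOfL /GamOfR; tauto.
apply: has_card_union => //; first by move=> g1; apply: GamOfL_GamOfR_disjoint Gg.
apply: has_card_ext (fun g1 => iff_sym (GamOfR_swap g g1)) _.
exact: has_card_image (can_inj swapK) L_card.
Qed.

Lemma Gam_Node_over i g c r : Gam i.+2 g -> c = gl g \/ c = gr g ->
  Gam i.+3 (Node g c r) <-> GamOf c r /\ r <> g.
Proof.
move=> Gg cg; rewrite Gam_Node; split=> [[_ [Gr [g_r [_ cr]]]] | [[Gr rc] r_g]].
- split; last by move=> r_g; apply: g_r; rewrite r_g.
  by split; [exists i.+2 | case: cr => ->; tauto].
- have Gc : Gam i.+1 c by have [] := Gam_children Gg; case: cg => ->.
  split=> //; split; first exact: GamAll_parent Gc Gr rc.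
  split; first by move=> g_r; apply: r_g; rewrite g_r.
  by split=> //; case: rc => <-; tauto.
Qed.

Lemma GamOfL_Node i g g1 : Gam i.+2 g -> GamOfL g g1 <->
  exists c, (c = gl g \/ c = gr g) /\ exists r, (GamOf c r /\ r <> g) /\ g1 = Node g c r.
Proof.
move=> Gg; split=> [Lg1 | [c [cg [r [Gr ->]]]]].
- have Gg1 := GamOfL_height Gg Lg1.
  have [l [c [r def_g1]]] := Gam_SS_Node Gg1; subst g1.
  case: Lg1 => _ /= l_g; subst l.
  have [_ [_ [_ [cg _]]]] := iffLR (Gam_Node _ _ _ _) Gg1.
  by exists c; split=> //; exists r; split=> //; apply/(Gam_Node_over r Gg cg).
- by split=> //; exists i.+3; apply/Gam_Node_over.
Qed.

Lemma GamOfL_Leaf x g1 : GamOfL (Leaf x) g1 <->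
  exists r, (Gam 1 r /\ r <> Leaf x) /\ g1 = Node (Leaf x) One r.
Proof.
have Gx : Gam 1 (Leaf x) by exists x.
split=> [Lg1 | [r [[Gr r_x] ->]]].
- have Gg1 := GamOfL_height Gx Lg1.
  have [l [c [r def_g1]]] := Gam_SS_Node Gg1; subst g1.
  case: Lg1 => _ /= l_x; subst l.
  have [_ [Gr [x_r [[] -> _]]]] := iffLR (Gam_Node _ _ _ _) Gg1;
    by exists r; split=> //; split=> // /esym.
- case: Gr r_x => y -> y_x; split=> //; exists 2; apply/Gam_Node.
  by split=> //; split; [exists y | split; [move/esym | split; left]].
Qed.

Lemma card_Gam1 : has_card (@Gam X 1) #|X|.
Proof.
suff: has_card (fun g => exists x, True /\ g = Leaf x) #|X|.
  by apply: has_card_ext => g; split=> [[x [_ ->]] | [x ->]]; exists x.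
by apply: has_card_image (has_card_finType X) => x y [].
Qed.

Lemma card_GamOfL i g : Gam i.+1 g -> has_card (GamOfL g) (GamOfL_count #|X| i).
Proof.
elim: i g => [|i IH] g Gg /=.
  case: Gg => x ->; apply: has_card_ext (fun g1 => iff_sym (GamOfL_Leaf x g1)) _.
  apply: has_card_image; first by move=> ? ? [].
  by apply: has_card_remove card_Gam1 _; exists x.
apply: has_card_ext (fun g1 => iff_sym (GamOfL_Node g1 Gg)) _.
apply: has_card_sigma.
- by move=> c c' g1 [r [_ ->]] [r' [_ []]].
- exact/has_card_pair/Gam_SS_gl_neq_gr/Gg.
- move=> c cg; apply: has_card_image; first by move=> ? ? [].
  have Gc : Gam i.+1 c by have [] := Gam_children Gg; case: cg => ->.
  exact: has_card_remove (card_GamOf Gc (IH c Gc)) (GamOf_child Gg cg).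
Qed.

Lemma card_Gam_SS i m :
  has_card (@Gam X i.+1) m -> has_card (@Gam X i.+2) (GamOfL_count #|X| i * m).
Proof.
move=> Gi_card.
suff: has_card (fun g1 => exists l, Gam i.+1 l /\ GamOfL l g1) (GamOfL_count #|X| i * m).
  apply: has_card_ext => g1; split=> [[l [Gl Lg1]] | Gg1].
    exact: GamOfL_height Gl Lg1.
  by exists (gl g1); split; [have [] := Gam_children Gg1 | split; first exists i.+2].
apply: has_card_sigma Gi_card _; first by move=> l l' g1 [_ <-] [_ <-].
by move=> l; apply: card_GamOfL.
Qed.

Lemma Gam_finite i : exists m, has_card (@Gam X i.+1) m.
Proof.
elim: i => [|i [m Gi_card]]; first by exists #|X|; apply: card_Gam1.
by exists (GamOfL_count #|X| i * m); apply: card_Gam_SS.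
Qed.

End Gamma.

Theorem lemma6p1 (X : finType) (n i : nat) (g : gam X) :
  #|X| = n -> 2 <= n -> 1 <= i -> Gam i g ->
  has_card (GamOf g) ((2 ^ (2 * i - 1) * (3 * n - 5) + 4) %/ 3) /\
  (exists c : nat, has_card (@Gam X i) c /\
     has_card (@Gam X i.+1) (((4 ^ (i - 1) * (3 * n - 5) + 2) %/ 3) * c)).
Proof.
move=> <- X_ge2; case: i => [//|i] _ Gg.
split; first by rewrite -double_GamOfL_countE //; apply: card_GamOf Gg (card_GamOfL Gg).
have [m Gi_card] := Gam_finite X i; exists m; split=> //.
by rewrite subSS subn0 -GamOfL_countE //; apply: card_Gam_SS.
Qed.
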